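(* Let $I:(0,1)\to(0,1)$ be a nondecreasing function. Then $\|S_If\|_{L^\infty}\lesssim\|f\|_{L^\infty}$ and $\|S_If\|_{m_I}\lesssim\|f\|_{m_I}$ for all $f\in\mathcal M_+(0,1)$; that is, $S_I$ is bounded on $L^\infty$ and on $m_I$.
   Context: $\mathcal M_+(0,1)$: nonnegative measurable functions on $(0,1)$; $f^*$ the nonincreasing rearrangement. $S_If(t)=\frac1{I(t)}\sup_{0<s\le t}I(s)f^*(s)$ for $t\in(0,1)$. $\|f\|_{m_I}=\sup_{0<t<1}I(t)f^*(t)$. $A\lesssim B$ means $A\le CB$ with $C$ independent of $f$. *)

From HB Require Import structures.
From mathcomp Require Import all_boot all_order all_algebra.
From mathcomp Require Import all_classical all_reals all_analysis measurable_realfun.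
Set Implicit Arguments. Unset Strict Implicit. Unset Printing Implicit Defensive.
Import Order.TTheory GRing.Theory Num.Theory.
Local Open Scope classical_set_scope.
Local Open Scope ring_scope.

Section Defs.
Context {R : realType}.
Local Open Scope ereal_scope.

Definition distrib (f : R -> \bar R) (lam : \bar R) : \bar R :=
  (@lebesgue_measure R) ([set x | (0 < x < 1)%R] `&` [set x | lam < f x]).

Definition rearr (f : R -> \bar R) (t : R) : \bar R :=
  ereal_inf [set lam : \bar R | 0 <= lam /\ distrib f lam <= t%:E].

Definition S_op (I : R -> R) (f : R -> \bar R) (t : R) : \bar R :=
  ((I t)^-1)%:E * ereal_sup [set (I s)%:E * rearr f s | s in [set s | (0 < s <= t)%R]].

Definition mI_norm (I : R -> R) (g : R -> \bar R) : \bar R :=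
  ereal_sup [set (I t)%:E * rearr g t | t in [set t | (0 < t < 1)%R]].

Definition Linf_norm (g : R -> \bar R) : \bar R :=
  ereal_inf [set lam : \bar R | 0 <= lam /\ distrib g lam = 0].

End Defs.

From HB Require Import structures.
From mathcomp Require Import all_boot all_order all_algebra.
From mathcomp Require Import all_classical all_reals all_analysis measurable_realfun.
Import Order.TTheory GRing.Theory Num.Theory.
Local Open Scope classical_set_scope.
Local Open Scope ring_scope.

(* Both bounds hold with constant 1 and follow from the pointwise estimate
   S_I f (x) <= M / I(x), valid whenever I(s) f^*(s) <= M for all s <= x.
   For L^oo take M = I(x) ||f||_oo, using f^* <= ||f||_oo and the monotonicity
   of I.  For m_I take M = ||f||_{m_I}: then S_I f is dominated by the
   nonincreasing function M / I, and a nonincreasing majorant phi of g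
   dominates g^* as well, since {g > phi(t)} lies in (0, t). *)

Section rearrangement.
Variable R : realType.
Implicit Types (f : R -> \bar R) (s t : R).

Lemma lebesgue_measure_le (A B : set R) : A `<=` B ->
  (lebesgue_measure A <= lebesgue_measure B)%E.
Proof.
move=> AB; rewrite /lebesgue_measure /lebesgue_stieltjes_measure /=.
exact: le_outer_measure.
Qed.

Lemma rearr_ge0 f s : (0 <= rearr f s)%E.
Proof. by apply: le_ereal_inf_tmp => y []. Qed.

Lemma rearr_le f s (lam : \bar R) :
  (0 <= lam)%E -> (distrib f lam <= s%:E)%E -> (rearr f s <= lam)%E.
Proof. by move=> lam0 dlam; exact: ereal_inf_lbound. Qed.

Lemma distrib_eq0 f (lam : \bar R) :
  (forall x, 0 < x < 1 -> (f x <= lam)%E) -> distrib f lam = 0%E.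
Proof.
move=> flam; rewrite /distrib.
suff -> : [set x | 0 < x < 1] `&` [set x | (lam < f x)%E] = set0 by exact: measure0.
by apply/seteqP; split => // x [/flam fx /=]; rewrite ltNge fx.
Qed.

Lemma rearr_le_nonincreasing_majorant f (phi : R -> R) t :
  (forall x y, 0 < x -> x <= y -> y < 1 -> phi y <= phi x) ->
  (forall x, 0 < x < 1 -> (f x <= (phi x)%:E)%E) ->
  0 < t -> 0 <= phi t -> (rearr f t <= (phi t)%:E)%E.
Proof.
move=> phi_decr f_le_phi t0 phit0; apply: rearr_le; first by rewrite lee_fin.
have := lebesgue_measure_itv `]0, t[; rewrite /= lte_fin t0 sube0 => <-.
apply: lebesgue_measure_le => x [x01 /= phit_lt_fx].
have /andP[x0 x1] := x01; rewrite in_itv /= x0 /= ltNge; apply/negP => tx.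
have := lt_le_trans phit_lt_fx (f_le_phi x x01).
by rewrite lte_fin ltNge phi_decr.
Qed.

End rearrangement.

Section S_op_bounds.
Variables (R : realType) (I : R -> R).
Hypothesis I_gt0 : forall t, 0 < t < 1 -> 0 < I t.
Hypothesis I_mono : forall s t, 0 < s -> s <= t -> t < 1 -> I s <= I t.
Implicit Types (f : R -> \bar R).

Lemma S_op_le f x (M : \bar R) : 0 < I x ->
  (forall s, 0 < s <= x -> ((I s)%:E * rearr f s <= M)%E) ->
  (S_op I f x <= ((I x)^-1)%:E * M)%E.
Proof.
move=> Ix0 IfM; apply: lee_wpmul2l; first by rewrite lee_fin invr_ge0 ltW.
by apply: ge_ereal_sup => _ [s hs <-]; exact: IfM.
Qed.

Lemma S_op_le_ess_bound f (lam : \bar R) x : 0 < x < 1 ->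
  (0 <= lam)%E -> distrib f lam = 0%E -> (S_op I f x <= lam)%E.
Proof.
move=> /andP[x0 x1] lam0 dlam; have Ix0 : 0 < I x by rewrite I_gt0 // x0.
case: lam lam0 dlam => [l| |] // lam0 dlam; last exact: leey.
rewrite -[l%:E]mul1e -(mulVf (lt0r_neq0 Ix0)) EFinM -muleA.
apply: S_op_le => // s /andP[s0 sx]; apply: lee_pmul => //.
- by rewrite lee_fin ltW // I_gt0 // s0 (le_lt_trans sx x1).
- exact: rearr_ge0.
- by rewrite lee_fin I_mono.
- by apply: rearr_le => //; rewrite dlam lee_fin ltW.
Qed.

Lemma Linf_norm_S_op_le f : (Linf_norm (S_op I f) <= Linf_norm f)%E.
Proof.
apply: ereal_inf_le_tmp => lam [lam0 dlam]; split => //.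
by apply: distrib_eq0 => x x01; exact: S_op_le_ess_bound.
Qed.

Lemma mI_norm_ge0 f : (0 <= mI_norm I f)%E.
Proof.
have half01 : 0 < (2^-1 : R) < 1.
  by apply/andP; split; [rewrite invr_gt0 | rewrite invf_lt1 ?ltr1n].
apply: le_trans (_ : ((I 2^-1)%:E * rearr f 2^-1 <= _)%E).
  by apply: mule_ge0; [rewrite lee_fin ltW ?I_gt0 | exact: rearr_ge0].
by apply: ereal_sup_ubound; exists 2^-1.
Qed.

Lemma S_op_le_mI_norm f x : 0 < x < 1 ->
  (S_op I f x <= ((I x)^-1)%:E * mI_norm I f)%E.
Proof.
move=> /andP[x0 x1]; apply: S_op_le; first by rewrite I_gt0 // x0.
move=> s /andP[s0 sx]; apply: ereal_sup_ubound; exists s => //=.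
by rewrite s0 (le_lt_trans sx x1).
Qed.

Lemma mI_norm_S_op_le f : (mI_norm I (S_op I f) <= mI_norm I f)%E.
Proof.
have := mI_norm_ge0 f; have := @S_op_le_mI_norm f.
case: (mI_norm I f) => [m| |] // Sf_le m0; last exact: leey.
apply: ge_ereal_sup => _ [t /andP[t0 t1] <-]; have It0 : 0 < I t by rewrite I_gt0 // t0.
have -> : m%:E = ((I t)%:E * ((I t)^-1 * m)%:E)%E.
  by rewrite -EFinM mulrA mulfV ?gt_eqF // mul1r.
apply: lee_wpmul2l; first by rewrite lee_fin ltW.
apply: (@rearr_le_nonincreasing_majorant R _ (fun x => (I x)^-1 * m)).
- move=> x y x0 xy y1; apply: ler_wpM2r; first by rewrite -lee_fin.
  have Ix0 : 0 < I x by rewrite I_gt0 // x0 (le_lt_trans xy y1).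
  have Iy0 : 0 < I y by rewrite I_gt0 // y1 (lt_le_trans x0 xy).
  by rewrite lef_pV2 ?posrE // I_mono.
- exact: Sf_le.
- exact: t0.
- by apply: mulr_ge0; [rewrite invr_ge0 ltW | rewrite -lee_fin].
Qed.

End S_op_bounds.

Theorem theorem3p4 (R : realType) (I : R -> R)
  (hI : forall t : R, 0 < t < 1 -> 0 < I t < 1)
  (hmono : forall s t : R, 0 < s -> s <= t -> t < 1 -> I s <= I t) :
  exists C : R, 0 < C /\
    forall f : R -> \bar R,
      measurable_fun [set x : R | 0 < x < 1] f ->
      (forall x : R, 0 < x < 1 -> (0 <= f x)%E) ->
      (Linf_norm (S_op I f) <= C%:E * Linf_norm f)%E /\
      (mI_norm I (S_op I f) <= C%:E * mI_norm I f)%E.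
Proof.
have I_gt0 t : 0 < t < 1 -> 0 < I t by case/hI/andP.
exists 1; split => // f _ _; rewrite !mul1e; split.
- exact: Linf_norm_S_op_le.
- exact: mI_norm_S_op_le.
Qed.
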